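(* Let $1\le k\le n$ and let $\mu\in\mathrm{TSpGr}_p(k,2n)$ be a valuated matroid in the tropical symplectic Grassmannian. Then the tropical linear space $L_\mu$ is isotropic.
   Context: $[2n]=\{1,\dots,n,\bar1,\dots,\bar n\}$ with $\bar{\bar i}=i$. $\mathbb{T}=\mathbb{R}\cup\{\infty\}$. For $\mu\in\mathbb{T}^{\binom{[2n]}{k}}$ (not all $\infty$, modulo adding constants) satisfying the tropical Plücker relations (valuated matroid of rank $k$), $L_\mu=\{x\in\mathbb{T}^{2n}:\forall T\in\binom{[2n]}{k+1},\ \min_{i\in T}(\mu_{T\setminus i}+x_i)\text{ attained at least twice or }\infty\}$. Points $x,y\in\mathbb{T}^{2n}$ are orthogonal if $\min_{i\in[2n]}(x_i+y_{\bar i})$ is attained at least twice; $L\subseteq\mathbb{T}^{2n}$ is isotropic if any two of its points are orthogonal. $\mathrm{TSpGr}_p(k,2n)$: for $\mathbb{K}$ algebraically closed of characteristic $p$ with non-Archimedean valuation $\mathrm{val}$, and $S_{k,2n}(\mathbb{K})$ the ideal of polynomials in the Plücker variables $X_J$, $J\in\binom{[2n]}{k}$, vanishing on Plücker vectors of $k$-dimensional subspaces isotropic for the standard symplectic form ($\omega(e_i,e_{\bar i})=1=-\omega(e_{\bar i},e_i)$, other pairings $0$), it is the set of $w\in\mathbb{TP}^{\binom{2n}{k}-1}$ such that for each $f=\sum_uc_uX^u\in S_{k,2n}(\mathbb{K})$ the minimum of $\mathrm{val}(c_u)+u\cdot w$ is attained at least twice. *)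

From HB Require Import structures.
From mathcomp Require Import all_boot all_order all_algebra.
From mathcomp Require Import mpoly.
From mathcomp Require Import reals constructive_ereal.

Set Implicit Arguments.
Unset Strict Implicit.
Unset Printing Implicit Defensive.

Import Order.TTheory GRing.Theory Num.Theory.
Local Open Scope ring_scope.

(* Ground set [2n] = 'I_(2*n): index i < n stands for i+1, index n+i stands
   for \bar{i+1}.  The involution i |-> \bar i. *)
Definition bar (n : nat) (i : 'I_(2 * n)) : 'I_(2 * n) :=
  insubd i (if (i < n)%N then (i + n)%N else (i - n)%N).

Definition kset (n k : nat) := {J : {set 'I_(2 * n)} | #|J| == k}.

(* Tropical numbers T = R \cup {oo} are modelled in \bar R (the value -oo is
   excluded by explicit hypotheses). *)

Definition min_twice {I : finType} {R : realType} (A : {set I}) (f : I -> \bar R)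
  : Prop :=
  exists i j, [/\ i \in A, j \in A, i != j, f i = f j &
                  forall l, l \in A -> (f i <= f l)%E].

Definition min_twice_or_inf {I : finType} {R : realType} (A : {set I})
  (f : I -> \bar R) : Prop :=
  min_twice A f \/ (forall l, l \in A -> f l = +oo%E).

Definition min_twice_seq {T : eqType} {R : realType} (s : seq T) (f : T -> \bar R)
  : Prop :=
  exists a b, [/\ a \in s, b \in s, a != b, f a = f b &
                  forall c, c \in s -> (f a <= f c)%E].

(* mu_J for an arbitrary subset J (oo if #|J| <> k; only used with #|J| = k) *)
Definition mu_ext {R : realType} (n k : nat) (mu : kset n k -> \bar R)
  (J : {set 'I_(2 * n)}) : \bar R :=
  match (insub J : option (kset n k)) with Some j => mu j | None => +oo%E end.

Definition trop_plucker {R : realType} (n k : nat) (mu : kset n k -> \bar R) : Prop :=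
  forall S T : {set 'I_(2 * n)}, #|S|.+1 = k -> #|T| = k.+1 ->
    min_twice_or_inf (T :\: S)
      (fun i => (mu_ext mu (i |: S) + mu_ext mu (T :\ i))%E).

Definition valuated_matroid {R : realType} (n k : nat) (mu : kset n k -> \bar R)
  : Prop :=
  [/\ forall J, mu J != -oo%E, exists J, mu J != +oo%E & trop_plucker mu].

Definition tpoint {R : realType} (n : nat) (x : 'I_(2 * n) -> \bar R) : Prop :=
  forall i, x i != -oo%E.

Definition Lmu {R : realType} (n k : nat) (mu : kset n k -> \bar R)
  (x : 'I_(2 * n) -> \bar R) : Prop :=
  tpoint x /\
  forall T : {set 'I_(2 * n)}, #|T| = k.+1 ->
    min_twice_or_inf T (fun i => (mu_ext mu (T :\ i) + x i)%E).

Definition orthogonal {R : realType} (n : nat) (x y : 'I_(2 * n) -> \bar R) : Prop :=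
  min_twice [set: 'I_(2 * n)] (fun i => (x i + y (bar i))%E).

Definition isotropic {R : realType} (n : nat) (L : ('I_(2 * n) -> \bar R) -> Prop)
  : Prop :=
  forall x y, L x -> L y -> orthogonal x y.

Definition is_valuation {K : fieldType} {R : realType} (v : K -> \bar R) : Prop :=
  [/\ forall x, v x != -oo%E,
      forall x, v x = +oo%E <-> x = 0,
      forall x y, v (x * y)%R = (v x + v y)%E &
      forall x y, (Order.min (v x) (v y) <= v (x + y)%R)%E].

(* K has characteristic p (p = 0 means characteristic zero) *)
Definition has_char (p : nat) (K : fieldType) : Prop :=
  if p == 0%N then [pchar K] =i pred0 else p \in [pchar K].

Definition omega {K : fieldType} (n : nat) (x y : 'rV[K]_(2 * n)) : K :=
  \sum_(i < 2 * n | (i < n)%N) (x 0 i * y 0 (bar i) - x 0 (bar i) * y 0 i).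

Definition isotropic_rows {K : fieldType} (n k : nat) (A : 'M[K]_(k, 2 * n)) : Prop :=
  forall a b : 'I_k, omega (row a A) (row b A) = 0.

(* the columns of J in increasing order *)
Definition kset_col (n k : nat) (J : kset n k) (j : 'I_k) : 'I_(2 * n) :=
  @enum_val _ (mem (val J)) (cast_ord (esym (eqP (valP J))) j).

Definition plucker {K : fieldType} (n k : nat) (A : 'M[K]_(k, 2 * n)) (J : kset n k)
  : K :=
  \det (colsub (@kset_col n k J) A).

(* the Plucker variables X_J are the variables of mpoly #|kset n k| K, the
   i-th variable being X_(enum_val i) *)
Definition pvar (n k : nat) (i : 'I_#|{: kset n k}|) : kset n k := enum_val i.

Definition plucker_poly (K : fieldType) (n k : nat) :=
  mpoly.mpoly #|{: kset n k}| K.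

Definition in_Sideal {K : fieldType} (n k : nat) (f : plucker_poly K n k) : Prop :=
  forall A : 'M[K]_(k, 2 * n), \rank A = k -> isotropic_rows A ->
    mpoly.meval (fun i => plucker A (pvar i)) f = 0.

Definition trop_vanish {K : fieldType} {R : realType} (val : K -> \bar R)
  (m : nat) (w : 'I_m -> \bar R) (f : mpoly.mpoly m K) : Prop :=
  f = 0 \/
  min_twice_seq (mpoly.msupp f)
    (fun u => (val (mpoly.mcoeff u f)
               + \sum_(i < m) (w i *+ mpoly.fun_of_multinom u i))%E).

Definition in_TSpGr {K : fieldType} {R : realType} (val : K -> \bar R)
  (n k : nat) (mu : kset n k -> \bar R) : Prop :=
  forall f : plucker_poly K n k, in_Sideal f ->
    trop_vanish val (fun i => mu (pvar i)) f.

From HB Require Import structures.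
From mathcomp Require Import all_boot all_order all_algebra.
From mathcomp Require Import mpoly.
From mathcomp Require Import reals constructive_ereal.
From mathcomp Require Import zify ring lra.

Set Implicit Arguments.
Unset Strict Implicit.
Unset Printing Implicit Defensive.
Import Order.TTheory GRing.Theory Num.Theory.
Local Open Scope ring_scope.

(* First, a tropical linear space [L_mu] is orthogonal
   to every vector [z] obeying the dual relations (for each (k-1)-set [U], the
   minimum of [mu (i |: U) + z i] is attained twice): if the minimum of
   [x + z] were attained only at [a], a basis [B] minimising
   [mu B + sum_(i in B) z i] must contain [a] (else exchanging [a] into [B]
   along the relation of [x] on [a |: B] would improve it), yet [a] can be
   exchanged out along the relation of [z] on [B :\ a].  Second, for
   (k-1)-sets [U], [V] the form [omega] evaluated on the vectors of maximal
   minors [i |-> p (i |: V)] and [i |-> p (bar i |: U)], both in the row space,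
   is a quadratic polynomial of [S_(k,2n)]; its tropicalisation says that
   [i |-> mu (bar i |: U)] obeys the dual relations.  Hence [y \o bar] obeys
   them for every [y] in [L_mu], and [x] is orthogonal to [y \o bar]. *)

Lemma ex_arg_min (T : finType) d (O : orderType d) (P : pred T) (f : T -> O) :
  (exists t, P t) -> exists t, P t /\ forall u, P u -> (f t <= f u)%O.
Proof. by case=> t Pt; case: (arg_minP f Pt) => u Pu H; exists u. Qed.

Lemma ex_arg_maxn (T : finType) (P : pred T) (f : T -> nat) :
  (exists t, P t) -> exists t, P t /\ forall u, P u -> (f u <= f t)%N.
Proof. by case=> t Pt; case: (@arg_maxnP _ t P f Pt) => u Pu H; exists u. Qed.

Section MinTwice.

Variables (I : finType) (R : realType).

Lemma min_twice_other (A : {set I}) (f : I -> \bar R) a :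
  min_twice A f -> exists c, [/\ c \in A, c != a & forall l, l \in A -> (f c <= f l)%E].
Proof.
case=> i [j [iA jA ij fij fmin]].
have [ia|] := eqVneq i a; last by exists i.
exists j; split=> //; first by rewrite -ia eq_sym.
by move=> l lA; rewrite -fij; apply: fmin.
Qed.

Lemma eq_min_twice_or_inf (A : {set I}) (f g : I -> \bar R) :
  {in A, f =1 g} -> min_twice_or_inf A f -> min_twice_or_inf A g.
Proof.
move=> fg [[i [j [iA jA ij fij fmin]]]|finf].
  by left; exists i, j; split=> // [|l lA]; rewrite -?fg ?fmin.
by right=> l lA; rewrite -fg ?finf.
Qed.

Lemma min_twice_or_inf_comp (f : I -> \bar R) (g g' : I -> I) :
  cancel g' g -> min_twice_or_inf [set: I] f -> min_twice_or_inf [set: I] (f \o g).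
Proof.
move=> g'K [[i [j [_ _ ij fij fmin]]]|finf].
  left; exists (g' i), (g' j); split; rewrite ?in_setT //= ?g'K ?(can_eq g'K) //.
  by move=> l _; rewrite fmin ?in_setT.
by right=> l _; rewrite /= finf ?in_setT.
Qed.

Lemma min_twice_or_inf_twice (A : {set I}) (f : I -> \bar R) i j :
  i \in A -> j \in A -> i != j -> min_twice_or_inf A f -> min_twice A f.
Proof.
move=> iA jA ij [//|finf]; exists i, j.
by split=> // [|l lA]; rewrite !finf ?leey.
Qed.

Lemma min_twiceVstrict (A : {set I}) (f : I -> \bar R) :
  (exists i, i \in A) ->
  min_twice A f \/ exists2 a, a \in A & forall j, j \in A -> j != a -> (f a < f j)%E.
Proof.
move=> A0; have [a [aA amin]] := @ex_arg_min _ _ _ (fun i => i \in A) f A0.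
have [j /andP [/andP [jA ja] /eqP fja]|noeq] :=
  pickP [pred j | (j \in A) && (j != a) && (f j == f a)].
  by left; exists a, j; split; rewrite // eq_sym.
right; exists a => // j jA ja; rewrite lt_neqAle amin // andbT eq_sym.
by have := noeq j; rewrite /= jA ja => /negbT.
Qed.

End MinTwice.

Section BigExchange.

Variables (T : finType) (V : Type) (idx : V) (op : Monoid.com_law idx) (F : T -> V).

Lemma big_exchange_setU1D1 (a c : T) (B : {set T}) : a \notin B -> c \in a |: B ->
  op (F c) (\big[op/idx]_(i in (a |: B) :\ c) F i) = op (F a) (\big[op/idx]_(i in B) F i).
Proof. by move=> aB cT; rewrite -big_setD1 // big_setU1. Qed.

Lemma big_exchange_setD1U1 (b c : T) (B : {set T}) : b \in B -> c \notin B :\ b ->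
  op (F b) (\big[op/idx]_(i in c |: (B :\ b)) F i) = op (F c) (\big[op/idx]_(i in B) F i).
Proof. by move=> bB cW; rewrite big_setU1 // [in RHS](big_setD1 b bB) Monoid.mulmCA. Qed.

End BigExchange.

Lemma fine_leD (R : realType) (a b c d : \bar R) :
  a \is a fin_num -> b \is a fin_num -> c \is a fin_num -> d \is a fin_num ->
  (a + b <= c + d)%E -> fine a + fine b <= fine c + fine d.
Proof. by move=> /fineK<- /fineK<- /fineK<- /fineK<-; rewrite -!EFinD lee_fin. Qed.

Lemma fine_ltD (R : realType) (a b c d : \bar R) :
  a \is a fin_num -> b \is a fin_num -> c \is a fin_num -> d \is a fin_num ->
  (a + b < c + d)%E -> fine a + fine b < fine c + fine d.
Proof. by move=> /fineK<- /fineK<- /fineK<- /fineK<-; rewrite -!EFinD lte_fin. Qed.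

Section TropicalDuality.

Variables (I : finType) (R : realType) (k : nat) (m : {set I} -> \bar R).

Definition trop_space (x : I -> \bar R) : Prop :=
  forall T : {set I}, #|T| = k.+1 ->
    min_twice_or_inf T (fun i => (m (T :\ i) + x i)%E).

Definition trop_cospace (z : I -> \bar R) : Prop :=
  forall U : {set I}, #|U|.+1 = k ->
    min_twice_or_inf [set: I] (fun i => (m (i |: U) + z i)%E).

Hypothesis m_ninfty : forall B, m B != -oo%E.
Hypothesis m_card : forall B, m B != +oo%E -> #|B| = k.
Hypothesis m_basis : exists B, m B != +oo%E.

Variables (x z : I -> \bar R).
Hypotheses (x_ninfty : forall i, x i != -oo%E) (z_ninfty : forall i, z i != -oo%E).
Hypotheses (x_space : trop_space x) (z_cospace : trop_cospace z).

Let fin_m B : m B != +oo%E -> m B \is a fin_num.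
Proof. by rewrite fin_numE m_ninfty. Qed.

Let fin_x i : x i != +oo%E -> x i \is a fin_num.
Proof. by rewrite fin_numE x_ninfty. Qed.

Let fin_z i : z i != +oo%E -> z i \is a fin_num.
Proof. by rewrite fin_numE z_ninfty. Qed.

Let zcount (B : {set I}) := (\sum_(i in B) (z i != +oo%E))%N.
Let zweight (B : {set I}) := fine (m B) + \sum_(i in B) fine (z i).

Let optimal (B : {set I}) := [/\ m B != +oo%E,
  forall B', m B' != +oo%E -> (zcount B' <= zcount B)%N &
  forall B', m B' != +oo%E -> zcount B' = zcount B -> zweight B <= zweight B'].

Lemma exists_optimal : exists B, optimal B.
Proof.
have [B1 [B1b B1max]] := @ex_arg_maxn _ (fun B => m B != +oo%E) zcount m_basis.
have [|B [/andP [Bb /eqP BB1] Bmin]] :=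
  @ex_arg_min _ _ _ (fun B => (m B != +oo%E) && (zcount B == zcount B1)) zweight.
  by exists B1; rewrite B1b eqxx.
exists B; split=> // [B' B'b|B' B'b B'B]; first by rewrite BB1 B1max.
by apply: Bmin; rewrite B'b B'B BB1 eqxx.
Qed.

Lemma optimal_exchange B b : optimal B -> b \in B -> z b != +oo%E ->
  exists c, [/\ c \notin B, z c != +oo%E & optimal (c |: (B :\ b))].
Proof.
move=> [Bb Bmax Bmin] bB zb.
have U_card : #|B :\ b|.+1 = k by rewrite -(m_card Bb) (cardsD1 b B) bB.
have fb : (m B + z b)%E != +oo%E by rewrite adde_Neq_pinfty ?Bb.
have [c [_ cb cmin]] : exists c, [/\ c \in [set: I], c != b &
    forall l, l \in [set: I] -> (m (c |: (B :\ b)) + z c <= m (l |: (B :\ b)) + z l)%E].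
  have [/(min_twice_other b) //|finf] := z_cospace U_card.
  by case/eqP: fb; rewrite -{1}(setD1K bB) finf ?in_setT.
have hc := cmin b (in_setT b); rewrite setD1K // in hc.
have : (m (c |: (B :\ b)) + z c)%E != +oo%E.
  by apply: contraTneq hc => ->; rewrite leye_eq.
rewrite adde_Neq_pinfty // => /andP [mc zc].
have cU : c \notin B :\ b.
  by move: (m_card mc); rewrite cardsU1; case: (c \notin _) => //= h; lia.
have count_eq : zcount (c |: (B :\ b)) = zcount B.
  have := big_exchange_setD1U1 addn (fun i => z i != +oo%E) bB cU.
  by rewrite zb zc; apply: addnI.
exists c; split=> //; first by move: cU; rewrite in_setD1 cb.
split=> // [B' B'b|B' B'b B'B]; first by rewrite count_eq Bmax.
apply: le_trans (Bmin B' B'b _); last by rewrite B'B.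
have : fine (z b) + \sum_(i in c |: (B :\ b)) fine (z i) =
       fine (z c) + \sum_(i in B) fine (z i) by exact: big_exchange_setD1U1.
have := fine_leD (fin_m mc) (fin_z zc) (fin_m Bb) (fin_z zb) hc.
rewrite /zweight; lra.
Qed.

Section StrictMinimum.

Variable a : I.
Hypothesis a_fin : (x a + z a)%E != +oo%E.
Hypothesis a_strict : forall j, j != a -> (x a + z a < x j + z j)%E.

Let xa_fin : x a != +oo%E.
Proof. by move: a_fin; rewrite adde_Neq_pinfty // => /andP []. Qed.

Let za_fin : z a != +oo%E.
Proof. by move: a_fin; rewrite adde_Neq_pinfty // => /andP []. Qed.

Lemma optimal_mem B : optimal B -> a \in B.
Proof.
move=> [Bb Bmax Bmin]; apply/negPn/negP => aB.
have T_card : #|a |: B| = k.+1 by rewrite cardsU1 aB (m_card Bb).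
have fa : (m B + x a)%E != +oo%E by rewrite adde_Neq_pinfty ?Bb.
have [c [cT ca cmin]] : exists c, [/\ c \in a |: B, c != a &
    forall l, l \in a |: B -> (m ((a |: B) :\ c) + x c <= m ((a |: B) :\ l) + x l)%E].
  have [/(min_twice_other a) //|finf] := x_space T_card.
  by case/eqP: fa; rewrite -{1}(setU1K aB) finf ?setU11.
have hc := cmin a (setU11 a B); rewrite setU1K // in hc.
have : (m ((a |: B) :\ c) + x c)%E != +oo%E.
  by apply: contraTneq hc => ->; rewrite leye_eq.
rewrite adde_Neq_pinfty // => /andP [mc xc].
have := big_exchange_setU1D1 addn (fun i => z i != +oo%E) aB cT.
rewrite za_fin -/(zcount B) -/(zcount _).
have [zc|/negPn/eqP zc] := boolP (z c != +oo%E); last first.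
  by rewrite /= add0n add1n => count_up; have := Bmax _ mc; rewrite count_up ltnn.
move=> /addnI count_eq.
have := Bmin _ mc count_eq.
have : fine (z c) + \sum_(i in (a |: B) :\ c) fine (z i) =
       fine (z a) + \sum_(i in B) fine (z i) by exact: big_exchange_setU1D1.
have := fine_leD (fin_m mc) (fin_x xc) (fin_m Bb) (fin_x xa_fin) hc.
have := fine_ltD (fin_x xa_fin) (fin_z za_fin) (fin_x xc) (fin_z zc) (a_strict ca).
rewrite /zweight; lra.
Qed.

Lemma strict_min_absurd : False.
Proof.
have [B oB] := exists_optimal.
have [c [cB _ oB']] := optimal_exchange oB (optimal_mem oB) za_fin.
have := optimal_mem oB'; rewrite in_setU1 in_setD1 eqxx /= orbF => /eqP ac.
by move: cB; rewrite -ac (optimal_mem oB).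
Qed.

End StrictMinimum.

Theorem trop_space_cospace_orthogonal :
  min_twice_or_inf [set: I] (fun i => (x i + z i)%E).
Proof.
have [i0 _|I0] := pickP (@predT I); last by right=> l; have := I0 l.
have [|[a _ a_strict]] := min_twiceVstrict (fun i => (x i + z i)%E)
  (ex_intro _ i0 (in_setT i0)); first by left.
have [a_inf|a_fin] := eqVneq (x a + z a)%E +oo%E.
  right=> l _; apply/eqP; rewrite -leye_eq -a_inf.
  by have [-> //|la] := eqVneq l a; rewrite ltW ?a_strict ?in_setT.
by case: (strict_min_absurd a_fin (fun j => a_strict j (in_setT j))).
Qed.

End TropicalDuality.

Section Involution.

Variable n : nat.

Lemma bar_val (i : 'I_(2 * n)) : nat_of_ord (bar i) = if (i < n)%N then (i + n)%N else (i - n)%N.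
Proof.
rewrite /bar val_insubd; have := ltn_ord i.
by case: (ltnP i n) => /= ? ?; case: ifP => // /negbT; lia.
Qed.

Lemma barK : involutive (@bar n).
Proof.
move=> i; apply: val_inj => /=; rewrite !bar_val; have := ltn_ord i.
by case: (ltnP i n) => ? ?; case: ifP; lia.
Qed.

Lemma bar_inj : injective (@bar n).
Proof. exact: inv_inj barK. Qed.

Lemma bar_neq (i : 'I_(2 * n)) : bar i != i.
Proof.
by apply/eqP => /(congr1 (@nat_of_ord _)); rewrite bar_val; have := ltn_ord i; case: ifP; lia.
Qed.

Lemma bar_lt (i : 'I_(2 * n)) : (bar i < n)%N = ~~ (i < n)%N.
Proof. by rewrite bar_val; have := ltn_ord i; case: ifP => ? ?; apply/idP/idP; lia. Qed.

End Involution.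

Section ValuatedMatroid.

Variables (R : realType) (n k : nat) (mu : kset n k -> \bar R).

Lemma mu_ext_val (J : kset n k) : mu_ext mu (val J) = mu J.
Proof. by rewrite /mu_ext valK. Qed.

Lemma mu_ext_oo (J : {set 'I_(2 * n)}) : #|J| != k -> mu_ext mu J = +oo%E.
Proof. by move=> Jk; rewrite /mu_ext insubF //; apply/negbTE. Qed.

Lemma mu_ext_card (J : {set 'I_(2 * n)}) : mu_ext mu J != +oo%E -> #|J| = k.
Proof. by apply: contraNeq => /mu_ext_oo ->. Qed.

Lemma mu_ext_ninfty (J : {set 'I_(2 * n)}) :
  (forall J, mu J != -oo%E) -> mu_ext mu J != -oo%E.
Proof. by rewrite /mu_ext; case: insubP. Qed.

End ValuatedMatroid.

Lemma isotropic_Lmu_of_quad (R : realType) n k (mu : kset n k -> \bar R) :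
  (0 < n)%N -> (forall J, mu J != -oo%E) -> (exists J, mu J != +oo%E) ->
  (forall U V : {set 'I_(2 * n)}, #|U|.+1 = k -> #|V|.+1 = k ->
     min_twice_or_inf [set: 'I_(2 * n)]
       (fun i => (mu_ext mu (i |: V) + mu_ext mu (bar i |: U))%E)) ->
  isotropic (Lmu mu).
Proof.
move=> n_gt0 mu_ninfty [J0 J0fin] quad x y [x_ninfty x_space] [y_ninfty y_space].
have m_ninfty J := mu_ext_ninfty J mu_ninfty.
have m_card := @mu_ext_card R n k mu.
have m_basis : exists B, mu_ext mu B != +oo%E by exists (val J0); rewrite mu_ext_val.
have ybar_cospace : trop_cospace k (mu_ext mu) (y \o @bar n).
  move=> U U_card.
  have := trop_space_cospace_orthogonal m_ninfty m_card m_basis y_ninfty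
    (z := fun i => mu_ext mu (bar i |: U)) (fun i => m_ninfty _) y_space
    (fun V V_card => quad U V U_card V_card).
  move/(min_twice_or_inf_comp (@barK n)); apply: eq_min_twice_or_inf => i _ /=.
  by rewrite barK addeC.
have i0 : 'I_(2 * n) by exists 0%N; rewrite muln_gt0.
apply: (min_twice_or_inf_twice (in_setT i0) (in_setT (bar i0))); first by rewrite eq_sym bar_neq.
exact: (trop_space_cospace_orthogonal m_ninfty m_card m_basis x_ninfty
  (z := y \o @bar n) (fun i => y_ninfty (bar i)) x_space ybar_cospace).
Qed.

Section SetEnumeration.

Variables (T : finType) (k : nat) (S : {set T}) (hS : #|S| = k).

Definition set_col (j : 'I_k) : T := @enum_val _ (mem S) (cast_ord (esym hS) j).

Lemma set_col_inj : injective set_col.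
Proof. by move=> j1 j2 /enum_val_inj /cast_ord_inj. Qed.

Lemma set_col_mem j : set_col j \in S.
Proof. exact: (@enum_valP _ (mem S)). Qed.

Lemma set_col_onto y : y \in S -> exists j, set_col j = y.
Proof.
by move=> yS; exists (cast_ord hS (enum_rank_in yS y)); rewrite /set_col cast_ordK enum_rankK_in.
Qed.

End SetEnumeration.

Section ColumnReindexing.

Variables (K : fieldType) (k m : nat).

Definition reindex_mx (h g : 'I_k -> 'I_m) : 'M[K]_k := \matrix_(r, c) (h c == g r)%:R.

Lemma sum_mul_eq_inj (g : 'I_k -> 'I_m) (F : 'I_k -> K) r0 :
  injective g -> \sum_r F r * (g r0 == g r)%:R = F r0.
Proof.
move=> g_inj; rewrite (bigD1 r0) //= eqxx mulr1 big1 ?addr0 // => r rr0.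
by rewrite (inj_eq g_inj) eq_sym (negbTE rr0) mulr0.
Qed.

Variables (h g : 'I_k -> 'I_m).
Hypotheses (h_inj : injective h) (g_inj : injective g).
Hypothesis h_sub_g : forall c, exists r, g r = h c.

Lemma colsub_reindex p (A : 'M[K]_(p, m)) : colsub h A = colsub g A *m reindex_mx h g.
Proof.
apply/matrixP => a c; rewrite !mxE; under eq_bigr do rewrite !mxE.
by have [r0 <-] := h_sub_g c; rewrite (sum_mul_eq_inj (fun r => A a (g r))).
Qed.

Lemma det_reindex_sqr : \det (reindex_mx h g) ^+ 2 = 1.
Proof.
have MtM : (reindex_mx h g)^T *m reindex_mx h g = 1%:M.
  apply/matrixP => c c'; rewrite !mxE; have [r0 hc] := h_sub_g c.
  under eq_bigr do rewrite !mxE mulrC -hc.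
  by rewrite sum_mul_eq_inj // hc (inj_eq h_inj) eq_sym.
by rewrite expr2 -{1}det_tr -det_mulmx MtM det1.
Qed.

End ColumnReindexing.

Section LastColumn.

Variables (k m : nat) (e : 'I_k -> 'I_m) (i : 'I_m).

Definition rcons_col (j : 'I_k.+1) : 'I_m :=
  if unlift ord_max j is Some j' then e j' else i.

Lemma rcons_col_max : rcons_col ord_max = i.
Proof. by rewrite /rcons_col unlift_none. Qed.

Lemma rcons_col_lift j : rcons_col (lift ord_max j) = e j.
Proof. by rewrite /rcons_col liftK. Qed.

Lemma rcons_col_inj : injective e -> (forall j, e j != i) -> injective rcons_col.
Proof.
move=> e_inj e_neq j1 j2.
case: (unliftP ord_max j1) => [j1'|] ->; case: (unliftP ord_max j2) => [j2'|] ->;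
  rewrite ?rcons_col_lift ?rcons_col_max //.
- by move/e_inj ->.
- by move=> eji; have := e_neq j1'; rewrite eji eqxx.
- by move=> eji; have := e_neq j2'; rewrite -eji eqxx.
Qed.

Lemma rcons_col_onto (S : {set 'I_m}) (f : 'I_k.+1 -> 'I_m) :
  (forall j, e j \in S) -> i \in S -> (forall y, y \in S -> exists r, f r = y) ->
  forall c, exists r, f r = rcons_col c.
Proof.
move=> eS iS f_onto c; apply: f_onto.
by case: (unliftP ord_max c) => [j|] ->; rewrite ?rcons_col_lift ?rcons_col_max.
Qed.

End LastColumn.

Section MaximalMinors.

Variables (K : fieldType) (k m : nat) (A : 'M[K]_(k.+1, m)).

Definition minor_row (e : 'I_k -> 'I_m) : 'rV[K]_m :=
  \row_i \det (colsub (rcons_col e i) A).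

Lemma minor_row_mulmx e :
  minor_row e = \row_r ((-1) ^+ (r + k) * \det (row' r (colsub e A))) *m A.
Proof.
apply/rowP => i; rewrite !mxE (expand_det_col _ ord_max); apply: eq_bigr => r _.
rewrite !mxE rcons_col_max mulrC /cofactor; congr (_ * \det (row' r _) * _).
by apply/matrixP => a b; rewrite !mxE rcons_col_lift.
Qed.

Lemma minor_row_eq0 e i : (exists j, e j = i) -> minor_row e 0 i = 0.
Proof.
case=> j eji; rewrite mxE -det_tr.
apply: (@determinant_alternate _ _ _ ord_max (lift ord_max j)); first by rewrite neq_lift.
by move=> a; rewrite !mxE rcons_col_max rcons_col_lift eji.
Qed.

End MaximalMinors.

Section SymplecticForm.

Variables (K : fieldType) (n : nat).

Definition sympl_sign (i : 'I_(2 * n)) : K := if (i < n)%N then 1 else -1.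

Lemma sympl_sign_sqr i : sympl_sign i ^+ 2 = 1.
Proof. by rewrite /sympl_sign; case: ifP; rewrite ?sqrrN expr1n. Qed.

Lemma omega_signed (x y : 'rV[K]_(2 * n)) :
  omega x y = \sum_i sympl_sign i * (x 0 i * y 0 (bar i)).
Proof.
rewrite /omega sumrB [RHS](bigID (fun i : 'I_(2 * n) => (i < n)%N)) /=.
congr (_ + _); first by apply: eq_bigr => i i_lt; rewrite /sympl_sign i_lt mul1r.
rewrite (reindex_inj (@bar_inj n)) /= -sumrN.
apply: eq_big => i; first by rewrite bar_lt.
by rewrite /sympl_sign bar_lt => /negbTE ->; rewrite barK mulN1r.
Qed.

Lemma omega_skew (x y : 'rV[K]_(2 * n)) : omega x y = - omega y x.
Proof.
rewrite /omega -sumrN; apply: eq_bigr => i _.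
by rewrite opprB; congr (_ - _); apply: mulrC.
Qed.

Lemma omega_suml p (c : 'I_p -> K) (u : 'I_p -> 'rV[K]_(2 * n)) y :
  omega (\sum_r c r *: u r) y = \sum_r c r * omega (u r) y.
Proof.
rewrite /omega; under [RHS]eq_bigr do rewrite mulr_sumr.
rewrite [RHS]exchange_big /=; apply: eq_bigr => i _.
rewrite !summxE !mulr_suml -sumrB; apply: eq_bigr => r _.
by rewrite !mxE mulrBr !mulrA.
Qed.

Lemma omega_mulmx_isotropic k (A : 'M[K]_(k, 2 * n)) (u v : 'rV[K]_k) :
  isotropic_rows A -> omega (u *m A) (v *m A) = 0.
Proof.
move=> A_iso; rewrite !mulmx_sum_row omega_suml big1 // => a _.
rewrite omega_skew omega_suml big1 ?oppr0 ?mulr0 // => b _.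
by rewrite A_iso mulr0.
Qed.

End SymplecticForm.

Lemma kset_colE n k (J : kset n k) : kset_col J = set_col (eqP (valP J)).
Proof. by []. Qed.

Section PluckerSign.

Variables (K : fieldType) (n k : nat) (V : {set 'I_(2 * n)}) (hV : #|V| = k).
Variables (i : 'I_(2 * n)) (J : kset n k.+1).
Hypotheses (iV : i \notin V) (J_def : val J = i |: V).

Let cols := rcons_col (set_col hV) i.

Definition plucker_sign : K := \det (reindex_mx K cols (kset_col J)).

Let cols_inj : injective cols.
Proof.
apply: rcons_col_inj; first exact: set_col_inj.
by move=> j; apply: contraNneq iV => <-; apply: set_col_mem.
Qed.

Let cols_sub_J c : exists r, kset_col J r = cols c.
Proof.
apply: (rcons_col_onto (S := val J)) => [j||y yJ]; rewrite ?J_def.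
- by rewrite setU1r ?set_col_mem.
- exact: setU11.
- by rewrite kset_colE; apply: set_col_onto.
Qed.

Lemma plucker_sign_sqr : plucker_sign ^+ 2 = 1.
Proof. apply: det_reindex_sqr cols_inj _ cols_sub_J; exact: set_col_inj. Qed.

Lemma minor_row_plucker (A : 'M[K]_(k.+1, 2 * n)) :
  minor_row A (set_col hV) 0 i = plucker A J * plucker_sign.
Proof.
rewrite mxE (colsub_reindex (g := kset_col J)) ?det_mulmx //; exact: set_col_inj.
Qed.

End PluckerSign.

Lemma mnm1D_eq M (a b c d : 'I_M) : (U_(a) + U_(b))%MM = (U_(c) + U_(d))%MM ->
  (a = c /\ b = d) \/ (a = d /\ b = c).
Proof.
move=> E; have Ea := congr1 (fun u : 'X_{1..M} => u a) E.
have Eb := congr1 (fun u : 'X_{1..M} => u b) E.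
rewrite /= !mnmDE !mnm1E eqxx in Ea Eb.
have [ac|ac] := eqVneq a c.
  by left; split=> //; move: Eb; rewrite -ac eqxx => /addnI; case: (eqVneq d b) => [->|].
have da : d = a.
  by move: Ea; rewrite [c == a]eq_sym (negbTE ac); case: (eqVneq d a) => // _; case: (b == a).
right; split=> //; move: Eb; rewrite da addnC => /addIn.
by rewrite eqxx; case: (eqVneq c b) => [->|].
Qed.

Lemma sum_mulrn_mnm1D (V : nmodType) M (w : 'I_M -> V) (a b : 'I_M) :
  \sum_(m < M) w m *+ (U_(a) + U_(b))%MM m = w a + w b.
Proof.
have mnm1_sum c : \sum_(m < M) w m *+ U_(c)%MM m = w c.
  rewrite (bigD1 c) //= mnm1E eqxx big1 ?addr0 // => m mc.
  by rewrite mnm1E eq_sym (negbTE mc).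
by under eq_bigr do rewrite mnmDE mulrnDr; rewrite big_split /= !mnm1_sum.
Qed.

Definition to_kset n k (d : kset n k) (S : {set 'I_(2 * n)}) : kset n k := insubd d S.

Lemma to_ksetK n k (d : kset n k) (S : {set 'I_(2 * n)}) : #|S| = k -> val (to_kset d S) = S.
Proof. by move=> Sk; rewrite val_insubd Sk eqxx. Qed.

Section QuadraticRelation.

Variables (K : fieldType) (n k : nat) (d : kset n k.+1) (U V : {set 'I_(2 * n)}).
Hypotheses (hU : #|U| = k) (hV : #|V| = k).

Let JV i := to_kset d (i |: V).
Let JU i := to_kset d (bar i |: U).

Definition quad_supp := [set i | (i \notin V) && (bar i \notin U)].

Definition quad_coef i : K :=
  sympl_sign K i * plucker_sign K hV i (JV i) * plucker_sign K hU (bar i) (JU i).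

Definition quad_mono i : 'X_{1..#|{: kset n k.+1}|} :=
  (U_(enum_rank (JV i)) + U_(enum_rank (JU i)))%MM.

(* [omega (minor_row A (set_col hV)) (minor_row A (set_col hU))] written in
   the Plucker coordinates of [A]. *)
Definition quad_poly : plucker_poly K n k.+1 :=
  \sum_(i in quad_supp) quad_coef i *: 'X_[quad_mono i].

Lemma quad_suppP i : reflect (i \notin V /\ bar i \notin U) (i \in quad_supp).
Proof. by rewrite inE; apply: andP. Qed.

Let JV_val i : i \notin V -> val (JV i) = i |: V.
Proof. by move=> iV; rewrite to_ksetK // cardsU1 iV hV. Qed.

Let JU_val i : bar i \notin U -> val (JU i) = bar i |: U.
Proof. by move=> iU; rewrite to_ksetK // cardsU1 iU hU. Qed.

Lemma quad_poly_in_Sideal : in_Sideal quad_poly.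
Proof.
move=> A _ A_iso.
transitivity (omega (minor_row A (set_col hV)) (minor_row A (set_col hU))); last first.
  by rewrite !minor_row_mulmx omega_mulmx_isotropic.
rewrite omega_signed raddf_sum big_mkcond /=; apply: eq_bigr => i _.
rewrite mevalZ mpolyXD mevalM !mevalXU /pvar !enum_rankK.
have [/quad_suppP [iV biU]|] := boolP (i \in quad_supp).
  by rewrite (minor_row_plucker hV (JV_val iV)) (minor_row_plucker hU (JU_val biU)) /quad_coef; ring.
rewrite inE negb_and !negbK => /orP [iV|biU].
  by rewrite minor_row_eq0 ?mul0r ?mulr0 //; apply: set_col_onto.
by rewrite [minor_row _ _ _ (bar i)]minor_row_eq0 ?mulr0 //; apply: set_col_onto.
Qed.

Lemma mcoeff_quad_poly u :
  quad_poly@_u = \sum_(i in quad_supp) quad_coef i * (quad_mono i == u)%:R.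
Proof.
rewrite (big_morph _ (@mcoeffD _ _ u) (@mcoeff0 _ _ u)); apply: eq_bigr => i _.
by rewrite mcoeffZ mcoeffX.
Qed.

Lemma quad_coef_sqr i : i \in quad_supp -> quad_coef i ^+ 2 = 1.
Proof.
case/quad_suppP => iV biU; rewrite !exprMn sympl_sign_sqr.
by rewrite (plucker_sign_sqr K hV iV (JV_val iV)) (plucker_sign_sqr K hU biU (JU_val biU)) !mulr1.
Qed.

Lemma quad_coef_neq0 i : i \in quad_supp -> quad_coef i != 0.
Proof.
move/quad_coef_sqr => c2; apply/eqP => c0.
by move: c2; rewrite c0 expr0n => /eqP; rewrite eq_sym oner_eq0.
Qed.

Lemma quad_mono_weight (R : realType) (w : kset n k.+1 -> \bar R) i : i \in quad_supp ->
  (\sum_(m < #|{: kset n k.+1}|) w (pvar m) *+ quad_mono i m)%E =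
  (mu_ext w (i |: V) + mu_ext w (bar i |: U))%E.
Proof.
case/quad_suppP => iV biU; rewrite sum_mulrn_mnm1D /pvar !enum_rankK.
by rewrite -(JV_val iV) -(JU_val biU) !mu_ext_val.
Qed.

Lemma msupp_quad_poly u : u \in msupp quad_poly -> exists2 i, i \in quad_supp & u = quad_mono i.
Proof.
rewrite mcoeff_msupp mcoeff_quad_poly.
have [i /andP [iS /eqP <-]|none] := pickP [pred i | (i \in quad_supp) && (quad_mono i == u)].
  by exists i.
by rewrite big1 ?eqxx // => i iS; have := none i; rewrite /= iS /= => ->; rewrite mulr0.
Qed.

Hypothesis UV : U != V.

Lemma quad_mono_inj : {in quad_supp &, injective quad_mono}.
Proof.
move=> i j /quad_suppP [iV biU] /quad_suppP [jV bjU].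
case/mnm1D_eq => [[/enum_rank_inj/(congr1 val) + _]|[/enum_rank_inj/(congr1 val) + /enum_rank_inj/(congr1 val)]].
  rewrite !JV_val // => E; have : i \in j |: V by rewrite -E setU11.
  by rewrite in_setU1 (negbTE iV) orbF => /eqP.
rewrite JV_val // !JU_val // JV_val // => E1 E2.
have : i \in bar j |: U by rewrite -E1 setU11.
rewrite in_setU1 => /orP [/eqP ibj|iU].
  by case/eqP: UV; rewrite -(setU1K iV) E1 -ibj setU1K // ibj.
have : i \in j |: V by rewrite -E2 setU1r.
by rewrite in_setU1 (negbTE iV) orbF => /eqP.
Qed.

Lemma mcoeff_quad_poly_mono i : i \in quad_supp -> quad_poly@_(quad_mono i) = quad_coef i.
Proof.
move=> iS; rewrite mcoeff_quad_poly (bigD1 i) //= eqxx mulr1 big1 ?addr0 // => j /andP [jS ji].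
by rewrite (inj_in_eq quad_mono_inj) // (negbTE ji) mulr0.
Qed.

End QuadraticRelation.

Lemma valuation_sqr1 (K : fieldType) (R : realType) (val : K -> \bar R) (c : K) :
  is_valuation val -> c ^+ 2 = 1 -> val c = 0%E.
Proof.
case=> v_ninfty v_oo vM _ c2.
have v_fin x : x != 0 -> val x \is a fin_num.
  by move=> x0; rewrite fin_numE v_ninfty; apply: contra_neq x0 => /v_oo.
have c0 : c != 0 by apply: contra_eq_neq c2 => ->; rewrite expr0n eq_sym oner_neq0.
have v1 : val 1 = 0%E.
  have := vM 1 1; rewrite mulr1; case: (val 1) (v_fin 1 (oner_neq0 K)) => // r _.
  by move=> /eqP; rewrite -EFinD eqe => /eqP r2; congr EFin; lra.
have := vM c c; rewrite -expr2 c2 v1; case: (val c) (v_fin c c0) => // r _.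
by move=> /eqP; rewrite -EFinD eqe => /eqP r2; congr EFin; lra.
Qed.

Lemma trop_quad_relation (R : realType) (K : fieldType) n k (val : K -> \bar R)
    (mu : kset n k.+1 -> \bar R) (d : kset n k.+1) (U V : {set 'I_(2 * n)})
    (hU : #|U| = k) (hV : #|V| = k) :
  is_valuation val -> in_TSpGr val mu -> (forall J, mu J != -oo%E) -> U != V ->
  min_twice_or_inf [set: 'I_(2 * n)]
    (fun i => (mu_ext mu (i |: V) + mu_ext mu (bar i |: U))%E).
Proof.
move=> val_v mu_trop mu_ninfty UV; set f := fun i => _.
have weight i : i \in quad_supp U V ->
    (val (quad_poly K d hU hV)@_(quad_mono d U V i) +
     \sum_(m < #|{: kset n k.+1}|) mu (pvar m) *+ quad_mono d U V i m)%E = f i.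
  move=> iS; rewrite mcoeff_quad_poly_mono // quad_mono_weight //.
  by rewrite (valuation_sqr1 val_v (quad_coef_sqr K d hU hV iS)) add0e.
have f_out i : i \notin quad_supp U V -> f i = +oo%E.
  rewrite inE negb_and !negbK => /orP [iV|biU]; rewrite /f.
    by rewrite (mu_ext_oo mu (J := i |: V)) ?addye ?mu_ext_ninfty // cardsU1 iV hV; lia.
  by rewrite (mu_ext_oo mu (J := bar i |: U)) ?addey ?mu_ext_ninfty // cardsU1 biU hU; lia.
have [q0|[a [b [aS bS ab eab amin]]]] := mu_trop _ (quad_poly_in_Sideal d hU hV).
  right=> i _; have [iS|/f_out //] := boolP (i \in quad_supp U V).
  by have := quad_coef_neq0 K d hU hV iS; rewrite -mcoeff_quad_poly_mono // q0 mcoeff0 eqxx.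
have [i iS ea] := msupp_quad_poly aS; have [j jS eb] := msupp_quad_poly bS.
left; exists i, j; split; rewrite ?in_setT -?weight -?ea -?eb //.
  by apply: contraNneq ab => ij; rewrite ea eb ij.
move=> l _; have [lS|/f_out ->] := boolP (l \in quad_supp U V); last by rewrite leey.
rewrite -weight // amin // mcoeff_msupp mcoeff_quad_poly_mono //; exact: quad_coef_neq0.
Qed.

Lemma min_twice_bar_invariant n (R : realType) (f : 'I_(2 * n) -> \bar R) :
  (0 < n)%N -> f \o @bar n =1 f -> min_twice [set: 'I_(2 * n)] f.
Proof.
move=> n_gt0 f_bar; have i0 : 'I_(2 * n) by exists 0%N; rewrite muln_gt0.
have [a [_ amin]] := @ex_arg_min _ _ _ predT f (ex_intro _ i0 isT).
exists a, (bar a); split; rewrite ?in_setT //.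
- by rewrite eq_sym bar_neq.
- exact/esym/f_bar.
- by move=> l _; apply: amin.
Qed.

Theorem proposition4p10 (R : realType) (p n k : nat) (K : closedFieldType)
    (val : K -> \bar R) (mu : kset n k -> \bar R) :
  (1 <= k <= n)%N ->
  has_char p K ->
  is_valuation val ->
  valuated_matroid mu ->
  in_TSpGr val mu ->
  isotropic (Lmu mu).
Proof.
case: k mu => [|k] mu; first by case/andP.
move=> /andP [_ k_lt_n] _ val_v [mu_ninfty mu_basis _] mu_trop.
have n_gt0 : (0 < n)%N by apply: leq_ltn_trans k_lt_n.
apply: isotropic_Lmu_of_quad => // U V [hU] [hV]; have [J0 _] := mu_basis.
have [<-|UV] := eqVneq U V; last exact: (trop_quad_relation J0 hU hV val_v mu_trop mu_ninfty UV).
by left; apply: min_twice_bar_invariant => // i /=; rewrite barK addeC.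
Qed.
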